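(* In a pre-Hilbert $*$-category: (i) every isometry is contractive; (ii) if $f\colon X\to Y$ and $g\colon Y\to Z$ are contractive, then $gf$ is contractive; (iii) if $f$ is contractive, then $f^*$ is contractive.
   Context: A $*$-category is a category with a choice of $f^*\colon Y\to X$ for each $f\colon X\to Y$ such that $1^*=1$, $(gf)^*=f^*g^*$, $(f^* )^*=f$; $f$ is an isometry if $f^*f=1$. A pre-Hilbert $*$-category is a $*$-category with (R1) a zero object, (R2) orthonormal biproducts of all pairs of objects (biproducts $(X,s_1,r_1,s_2,r_2)$ with $r_k=s_k^*$), (R3) an isometric kernel for every morphism, and (R4) every diagonal $\Delta\colon X\to X\oplus X$ a kernel of some morphism. Such a category is additive. For Hermitian endomorphisms $a,b\colon A\to A$ (i.e. $a^*=a$, $b^*=b$), $a\leq b$ means $b-a=y^*y$ for some object $Y$ and some $y\colon A\to Y$. A morphism $f$ is contractive (a contraction) if $f^*f\leq 1$. *)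

Set Implicit Arguments.
Unset Strict Implicit.

Record Category := {
  Ob :> Type;
  Hom : Ob -> Ob -> Type;
  comp : forall {X Y Z : Ob}, Hom Y Z -> Hom X Y -> Hom X Z;
  idm : forall X : Ob, Hom X X;
  comp_assoc : forall (W X Y Z : Ob) (h : Hom Y Z) (g : Hom X Y) (f : Hom W X),
      comp h (comp g f) = comp (comp h g) f;
  comp_id_l : forall (X Y : Ob) (f : Hom X Y), comp (idm Y) f = f;
  comp_id_r : forall (X Y : Ob) (f : Hom X Y), comp f (idm X) = f
}.

Arguments Hom {c} _ _.
Arguments comp {c X Y Z} _ _.
Arguments idm {c} X.

Record StarCategory := {
  scat :> Category;
  star : forall {X Y : scat}, Hom X Y -> Hom Y X;
  star_id : forall X : scat, star (idm X) = idm X;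
  star_comp : forall (X Y Z : scat) (f : Hom X Y) (g : Hom Y Z),
      star (comp g f) = comp (star f) (star g);
  star_star : forall (X Y : scat) (f : Hom X Y), star (star f) = f
}.

Arguments star {s X Y} _.

Section Notions.
Variable C : StarCategory.

Definition isometry {X Y : C} (f : Hom X Y) : Prop := comp (star f) f = idm X.

Definition hermitian {X : C} (a : Hom X X) : Prop := star a = a.

Definition is_zero_object (O : C) : Prop :=
  (forall X : C, (exists f : Hom X O, True) /\ forall f g : Hom X O, f = g) /\
  (forall X : C, (exists f : Hom O X, True) /\ forall f g : Hom O X, f = g).

Definition is_zero_morphism (O : C) {X Y : C} (f : Hom X Y) : Prop :=
  exists (u : Hom X O) (v : Hom O Y), f = comp v u.

(** Orthonormal biproduct (B, s1, r1, s2, r2) of X1 and X2 with r_k = s_k^*: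
    (B, r1, r2) is a product, (B, s1, s2) a coproduct, and r_j s_k = delta_jk. *)
Definition is_orth_biproduct (O : C) (X1 X2 B : C)
    (s1 : Hom X1 B) (s2 : Hom X2 B) : Prop :=
  comp (star s1) s1 = idm X1 /\ comp (star s2) s2 = idm X2 /\
  is_zero_morphism O (comp (star s2) s1) /\ is_zero_morphism O (comp (star s1) s2) /\
  (forall (A : C) (f1 : Hom A X1) (f2 : Hom A X2),
      exists h : Hom A B, comp (star s1) h = f1 /\ comp (star s2) h = f2 /\
        forall h' : Hom A B, comp (star s1) h' = f1 -> comp (star s2) h' = f2 -> h' = h) /\
  (forall (A : C) (g1 : Hom X1 A) (g2 : Hom X2 A),
      exists h : Hom B A, comp h s1 = g1 /\ comp h s2 = g2 /\
        forall h' : Hom B A, comp h' s1 = g1 -> comp h' s2 = g2 -> h' = h).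

Definition is_kernel (O : C) {K X Y : C} (k : Hom K X) (f : Hom X Y) : Prop :=
  is_zero_morphism O (comp f k) /\
  forall (A : C) (h : Hom A X), is_zero_morphism O (comp f h) ->
    exists u : Hom A K, comp k u = h /\ forall u' : Hom A K, comp k u' = h -> u' = u.

End Notions.

(** * Pre-Hilbert *-categories (R1)-(R4).  The zero object and a choice of
    orthonormal biproduct for each pair of objects are carried as data. *)
Record PreHilbertCategory := {
  phstar :> StarCategory;
  zobj : phstar;
  zobj_zero : is_zero_object zobj;
  bprod : phstar -> phstar -> phstar;
  bin1 : forall X Y : phstar, Hom X (bprod X Y);
  bin2 : forall X Y : phstar, Hom Y (bprod X Y);
  bprod_orth : forall X Y : phstar,
      is_orth_biproduct zobj (bin1 X Y) (bin2 X Y);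
  isometric_kernels : forall (X Y : phstar) (f : Hom X Y),
      exists (K : phstar) (k : Hom K X), isometry k /\ is_kernel zobj k f;
  diagonal_kernels : forall (X : phstar) (d : Hom X (bprod X X)),
      comp (star (bin1 X X)) d = idm X -> comp (star (bin2 X X)) d = idm X ->
      exists (Z : phstar) (g : Hom (bprod X X) Z), is_kernel zobj d g
}.

Section Order.
Variable C : PreHilbertCategory.

(** The canonical (biproduct-induced) sum of morphisms: [h = f + g] iff
    h = nabla o <f, g> where <f,g> : A -> B(+)B is the pairing and
    nabla : B(+)B -> B the codiagonal. *)
Definition is_sum {A B : C} (f g h : Hom A B) : Prop :=
  exists (p : Hom A (bprod B B)) (q : Hom (bprod B B) B),
    comp (star (bin1 B B)) p = f /\ comp (star (bin2 B B)) p = g /\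
    comp q (bin1 B B) = idm B /\ comp q (bin2 B B) = idm B /\
    h = comp q p.

(** For Hermitian a, b : A -> A, a <= b iff b - a = y^* y for some y : A -> Y,
    i.e. (the category being additive) b = a + y^* y. *)
Definition hle {A : C} (a b : Hom A A) : Prop :=
  hermitian a /\ hermitian b /\
  exists (Y : C) (y : Hom A Y), is_sum a (comp (star y) y) b.

Definition contractive {X Y : C} (f : Hom X Y) : Prop :=
  hle (comp (star f) f) (idm X).

End Order.

(** The zero object and the orthonormal biproducts make every hom-set a
    commutative monoid, with [f + g] the codiagonal composed with the pairing
    of [f] and [g]; composition is bilinear and [*] is additive.  (R3) and (R4)
    supply negatives: if [<a, b>] is an isometric kernel of the codiagonal of
    [X (+) X], then [a + b = 0] and [a^* a + b^* b = 1], and (R4) makes [a] an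
    epimorphism.  Hence [a^* a = b^* b], so [c = 2 a^*] is the inverse of
    [a], and [b c] is [-1].  A morphism [f] is contractive iff
    [f^* f + w^* w = 1] for some [w], and the three claims follow from the
    witnesses [0] for an isometry, [<z f, y>] for a composite [g f], and
    [<1 - f f^*, w f^*>] for [f^*]. *)

From Stdlib Require Import ClassicalEpsilon.

Set Implicit Arguments.
Unset Strict Implicit.

Local Notation "g ∘ f" := (comp g f) (at level 40, left associativity).

Lemma epi_of_star_mono (C : StarCategory) (K X : C) (a : Hom K X) :
  (forall (A : C) (h h' : Hom A X), star a ∘ h = star a ∘ h' -> h = h') ->
  forall (A : C) (x y : Hom X A), x ∘ a = y ∘ a -> x = y.
Proof.
  intros Hmono A x y E.
  rewrite <- (star_star x), <- (star_star y). f_equal.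
  apply Hmono. now rewrite <- !star_comp, E.
Qed.

Section ZeroMorphisms.
Variables (C : StarCategory) (O : C).
Hypothesis HO : is_zero_object O.

Definition to_zero (X : C) : Hom X O :=
  proj1_sig (constructive_indefinite_description _ (proj1 (proj1 HO X))).
Definition from_zero (X : C) : Hom O X :=
  proj1_sig (constructive_indefinite_description _ (proj1 (proj2 HO X))).
Definition zero_hom (X Y : C) : Hom X Y := from_zero Y ∘ to_zero X.

Lemma to_zero_unique {X : C} (f g : Hom X O) : f = g.
Proof. exact (proj2 (proj1 HO X) f g). Qed.

Lemma from_zero_unique {X : C} (f g : Hom O X) : f = g.
Proof. exact (proj2 (proj2 HO X) f g). Qed.

Lemma is_zero_morphismP (X Y : C) (f : Hom X Y) :
  is_zero_morphism O f <-> f = zero_hom X Y.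
Proof.
  split.
  - intros (u & v & ->). unfold zero_hom.
    now rewrite (to_zero_unique u (to_zero X)), (from_zero_unique v (from_zero Y)).
  - intros ->. now exists (to_zero X), (from_zero Y).
Qed.

Lemma comp_zero_l (X Y Z : C) (f : Hom X Y) : zero_hom Y Z ∘ f = zero_hom X Z.
Proof.
  unfold zero_hom. now rewrite <- comp_assoc, (to_zero_unique (to_zero Y ∘ f) (to_zero X)).
Qed.

Lemma comp_zero_r (X Y Z : C) (f : Hom Y Z) : f ∘ zero_hom X Y = zero_hom X Z.
Proof.
  unfold zero_hom. now rewrite comp_assoc, (from_zero_unique (f ∘ from_zero Y) (from_zero Z)).
Qed.

Lemma star_zero (X Y : C) : star (zero_hom X Y) = zero_hom Y X.
Proof.
  unfold zero_hom. rewrite star_comp.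
  now rewrite (to_zero_unique (star (from_zero Y)) (to_zero Y)),
    (from_zero_unique (star (to_zero X)) (from_zero X)).
Qed.

End ZeroMorphisms.

Arguments zero_hom {C O} HO {X Y}.

Section PreHilbert.
Variable C : PreHilbertCategory.

Local Notation zero := (zero_hom (zobj_zero C)).
Local Notation zero_morphismP := (is_zero_morphismP (zobj_zero C)).
Local Notation "X ⊕ Y" := (bprod X Y) (at level 35).

Section Biproduct.
Variables X Y : C.
Local Notation s1 := (bin1 X Y).
Local Notation s2 := (bin2 X Y).

Lemma proj1_inj1 : star s1 ∘ s1 = idm X.
Proof. now destruct (bprod_orth X Y). Qed.

Lemma proj2_inj2 : star s2 ∘ s2 = idm Y.
Proof. now destruct (bprod_orth X Y) as (_ & H & _). Qed.

Lemma proj2_inj1 : star s2 ∘ s1 = zero.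
Proof. apply zero_morphismP. now destruct (bprod_orth X Y) as (_ & _ & H & _). Qed.

Lemma proj1_inj2 : star s1 ∘ s2 = zero.
Proof. apply zero_morphismP. now destruct (bprod_orth X Y) as (_ & _ & _ & H & _). Qed.

Lemma pairing_exists (A : C) (f1 : Hom A X) (f2 : Hom A Y) :
  exists h : Hom A (X ⊕ Y), star s1 ∘ h = f1 /\ star s2 ∘ h = f2 /\
    forall h', star s1 ∘ h' = f1 -> star s2 ∘ h' = f2 -> h' = h.
Proof. now destruct (bprod_orth X Y) as (_ & _ & _ & _ & H & _). Qed.

Lemma copairing_exists (A : C) (g1 : Hom X A) (g2 : Hom Y A) :
  exists h : Hom (X ⊕ Y) A, h ∘ s1 = g1 /\ h ∘ s2 = g2 /\
    forall h', h' ∘ s1 = g1 -> h' ∘ s2 = g2 -> h' = h.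
Proof. now destruct (bprod_orth X Y) as (_ & _ & _ & _ & _ & H). Qed.

Definition pair {A : C} (f1 : Hom A X) (f2 : Hom A Y) : Hom A (X ⊕ Y) :=
  proj1_sig (constructive_indefinite_description _ (pairing_exists f1 f2)).

Definition copair {A : C} (g1 : Hom X A) (g2 : Hom Y A) : Hom (X ⊕ Y) A :=
  proj1_sig (constructive_indefinite_description _ (copairing_exists g1 g2)).

Section Pairing.
Variables (A : C) (f1 : Hom A X) (f2 : Hom A Y).

Lemma pair_spec : star s1 ∘ pair f1 f2 = f1 /\ star s2 ∘ pair f1 f2 = f2 /\
  forall h, star s1 ∘ h = f1 -> star s2 ∘ h = f2 -> h = pair f1 f2.
Proof. exact (proj2_sig (constructive_indefinite_description _ (pairing_exists f1 f2))). Qed.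

Lemma proj1_pair : star s1 ∘ pair f1 f2 = f1.
Proof. apply pair_spec. Qed.

Lemma proj2_pair : star s2 ∘ pair f1 f2 = f2.
Proof. apply pair_spec. Qed.

Lemma pair_unique (h : Hom A (X ⊕ Y)) :
  star s1 ∘ h = f1 -> star s2 ∘ h = f2 -> h = pair f1 f2.
Proof. apply pair_spec. Qed.

End Pairing.

Section Copairing.
Variables (A : C) (g1 : Hom X A) (g2 : Hom Y A).

Lemma copair_spec : copair g1 g2 ∘ s1 = g1 /\ copair g1 g2 ∘ s2 = g2 /\
  forall h, h ∘ s1 = g1 -> h ∘ s2 = g2 -> h = copair g1 g2.
Proof. exact (proj2_sig (constructive_indefinite_description _ (copairing_exists g1 g2))). Qed.

Lemma copair_inj1 : copair g1 g2 ∘ s1 = g1.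
Proof. apply copair_spec. Qed.

Lemma copair_inj2 : copair g1 g2 ∘ s2 = g2.
Proof. apply copair_spec. Qed.

Lemma copair_unique (h : Hom (X ⊕ Y) A) : h ∘ s1 = g1 -> h ∘ s2 = g2 -> h = copair g1 g2.
Proof. apply copair_spec. Qed.

End Copairing.

Lemma pair_eta (A : C) (h : Hom A (X ⊕ Y)) : h = pair (star s1 ∘ h) (star s2 ∘ h).
Proof. now apply pair_unique. Qed.

Lemma proj_ext (A : C) (h h' : Hom A (X ⊕ Y)) :
  star s1 ∘ h = star s1 ∘ h' -> star s2 ∘ h = star s2 ∘ h' -> h = h'.
Proof. intros E1 E2. now rewrite (pair_eta h), (pair_eta h'), E1, E2. Qed.

Lemma inj_ext (A : C) (h h' : Hom (X ⊕ Y) A) : h ∘ s1 = h' ∘ s1 -> h ∘ s2 = h' ∘ s2 -> h = h'.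
Proof.
  intros E1 E2. rewrite (copair_unique (h := h) E1 E2). symmetry; now apply copair_unique.
Qed.

Lemma comp_pair (A Z : C) (f1 : Hom A X) (f2 : Hom A Y) (h : Hom Z A) :
  pair f1 f2 ∘ h = pair (f1 ∘ h) (f2 ∘ h).
Proof. apply pair_unique; now rewrite comp_assoc, ?proj1_pair, ?proj2_pair. Qed.

Lemma comp_copair (A Z : C) (g1 : Hom X A) (g2 : Hom Y A) (k : Hom A Z) :
  k ∘ copair g1 g2 = copair (k ∘ g1) (k ∘ g2).
Proof. apply copair_unique; now rewrite <- comp_assoc, ?copair_inj1, ?copair_inj2. Qed.

Lemma pair_zero_r (A : C) (f : Hom A X) : pair f zero = s1 ∘ f.
Proof.
  symmetry; apply pair_unique; rewrite comp_assoc.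
  - now rewrite proj1_inj1, comp_id_l.
  - now rewrite proj2_inj1, comp_zero_l.
Qed.

Lemma pair_zero_l (A : C) (f : Hom A Y) : pair zero f = s2 ∘ f.
Proof.
  symmetry; apply pair_unique; rewrite comp_assoc.
  - now rewrite proj1_inj2, comp_zero_l.
  - now rewrite proj2_inj2, comp_id_l.
Qed.

Lemma star_pair (A : C) (f1 : Hom A X) (f2 : Hom A Y) :
  star (pair f1 f2) = copair (star f1) (star f2).
Proof.
  apply copair_unique.
  - now rewrite <- (star_star s1), <- star_comp, proj1_pair.
  - now rewrite <- (star_star s2), <- star_comp, proj2_pair.
Qed.

Lemma star_copair (A : C) (g1 : Hom X A) (g2 : Hom Y A) :
  star (copair g1 g2) = pair (star g1) (star g2).
Proof. now rewrite <- (star_star (pair _ _)), star_pair, !star_star. Qed.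

End Biproduct.

Local Notation s1 := (bin1 _ _).
Local Notation s2 := (bin2 _ _).

Definition add {A B : C} (f g : Hom A B) : Hom A B := copair (idm B) (idm B) ∘ pair f g.

Lemma is_sum_add (A B : C) (f g h : Hom A B) : is_sum f g h <-> h = add f g.
Proof.
  split.
  - intros (p & q & E1 & E2 & E3 & E4 & ->). unfold add.
    now rewrite (pair_unique E1 E2), (copair_unique E3 E4).
  - intros ->. exists (pair f g), (copair (idm B) (idm B)).
    now rewrite proj1_pair, proj2_pair, copair_inj1, copair_inj2.
Qed.

Lemma add_zero_r (A B : C) (f : Hom A B) : add f zero = f.
Proof. unfold add. now rewrite pair_zero_r, comp_assoc, copair_inj1, comp_id_l. Qed.

Lemma add_zero_l (A B : C) (f : Hom A B) : add zero f = f.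
Proof. unfold add. now rewrite pair_zero_l, comp_assoc, copair_inj2, comp_id_l. Qed.

Lemma comp_add_r (A B D : C) (f g : Hom A B) (m : Hom D A) :
  add f g ∘ m = add (f ∘ m) (g ∘ m).
Proof. unfold add. now rewrite <- comp_assoc, comp_pair. Qed.

Lemma biproduct_expand (X Y Z : C) (c : Hom (X ⊕ Y) Z) :
  c = add (c ∘ s1 ∘ star s1) (c ∘ s2 ∘ star s2).
Proof.
  apply inj_ext; rewrite comp_add_r, <- !comp_assoc.
  - now rewrite proj1_inj1, proj2_inj1, comp_id_r, comp_zero_r, comp_zero_r, add_zero_r.
  - now rewrite proj1_inj2, proj2_inj2, comp_id_r, comp_zero_r, comp_zero_r, add_zero_l.
Qed.

Lemma copair_comp_pair (A X Y Z : C) (g1 : Hom X Z) (g2 : Hom Y Z) (f1 : Hom A X) (f2 : Hom A Y) :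
  copair g1 g2 ∘ pair f1 f2 = add (g1 ∘ f1) (g2 ∘ f2).
Proof.
  rewrite (biproduct_expand (copair g1 g2)), comp_add_r, copair_inj1, copair_inj2, <- !comp_assoc.
  now rewrite proj1_pair, proj2_pair.
Qed.

Lemma star_pair_comp_pair (A A' X Y : C) (f1 : Hom A X) (f2 : Hom A Y) (g1 : Hom A' X) (g2 : Hom A' Y) :
  star (pair f1 f2) ∘ pair g1 g2 = add (star f1 ∘ g1) (star f2 ∘ g2).
Proof. now rewrite star_pair, copair_comp_pair. Qed.

Lemma comp_add_l (A B D : C) (f g : Hom A B) (k : Hom B D) :
  k ∘ add f g = add (k ∘ f) (k ∘ g).
Proof. unfold add at 1. now rewrite comp_assoc, comp_copair, copair_comp_pair, !comp_id_r. Qed.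

Lemma star_add (A B : C) (f g : Hom A B) : star (add f g) = add (star f) (star g).
Proof.
  unfold add at 1.
  now rewrite star_comp, star_pair, star_copair, copair_comp_pair, star_id, !comp_id_r.
Qed.

Lemma add_comm (A B : C) (f g : Hom A B) : add f g = add g f.
Proof.
  assert (Hswap : pair g f = add (s2 ∘ f) (s1 ∘ g)).
  { apply proj_ext; rewrite comp_add_l, !comp_assoc.
    - now rewrite proj1_pair, proj1_inj2, proj1_inj1, comp_zero_l, comp_id_l, add_zero_l.
    - now rewrite proj2_pair, proj2_inj2, proj2_inj1, comp_zero_l, comp_id_l, add_zero_r. }
  unfold add at 2.
  now rewrite Hswap, comp_add_l, !comp_assoc, copair_inj1, copair_inj2, !comp_id_l.
Qed.

Lemma add_assoc (A B : C) (a b c : Hom A B) : add (add a b) c = add a (add b c).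
Proof.
  set (P := pair (pair a b) c).
  assert (Ha : a = star s1 ∘ star s1 ∘ P) by (unfold P; now rewrite <- comp_assoc, !proj1_pair).
  assert (Hb : b = star s2 ∘ star s1 ∘ P)
    by (unfold P; now rewrite <- comp_assoc, proj1_pair, proj2_pair).
  assert (Hc : c = star s2 ∘ P) by (unfold P; now rewrite proj2_pair).
  rewrite Ha, Hb, Hc, <- !comp_add_r. f_equal.
  apply inj_ext; rewrite !comp_add_r, <- !comp_assoc.
  - now rewrite proj1_inj1, proj2_inj1, !comp_id_r, !add_zero_r.
  - now rewrite proj1_inj2, proj2_inj2, !comp_zero_r, !add_zero_l.
Qed.

Lemma opposite_unique (A B : C) (u v t : Hom A B) :
  add u t = zero -> add v t = zero -> u = v.
Proof.
  intros Hu Hv.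
  now rewrite <- (add_zero_r u), <- Hv, <- add_assoc, (add_comm u v), add_assoc, Hu, add_zero_r.
Qed.

Section DiagonalKernels.
Variable X : C.
Local Notation diag := (pair (idm X) (idm X)).
Variables (Z K : C) (g : Hom (X ⊕ X) Z) (k : Hom K (X ⊕ X)).
Hypothesis diag_ker : is_kernel (zobj C) diag g.
Hypothesis codiag_ker : is_kernel (zobj C) k (star diag).

Lemma codiag_kernel_proj_sum : add (star s1 ∘ k) (star s2 ∘ k) = zero.
Proof.
  destruct codiag_ker as [Hzero _]. apply zero_morphismP in Hzero.
  unfold add. now rewrite <- pair_eta, <- Hzero, star_pair, star_id.
Qed.

Lemma codiag_kernel_proj1_star_mono (A : C) (h h' : Hom A X) :
  star (star s1 ∘ k) ∘ h = star (star s1 ∘ k) ∘ h' -> h = h'.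
Proof.
  (* [<h, h'>] is killed by [k^*], hence by [g], so it factors through the diagonal. *)
  intros E.
  destruct diag_ker as [Hg0 Hg_univ]. apply zero_morphismP in Hg0.
  destruct codiag_ker as [_ Hk_univ].
  assert (Hk : star k ∘ pair h h' = zero).
  { rewrite (pair_eta k), star_pair_comp_pair, E, <- comp_add_r, <- star_add.
    now rewrite codiag_kernel_proj_sum, star_zero, comp_zero_l. }
  destruct (Hk_univ _ (star g)) as (u & Hu & _).
  { apply zero_morphismP. now rewrite <- star_comp, Hg0, star_zero. }
  destruct (Hg_univ _ (pair h h')) as (w & Hw & _).
  { apply zero_morphismP.
    now rewrite <- (star_star g), <- Hu, star_comp, <- comp_assoc, Hk, comp_zero_r. }
  assert (Hh : h = w) by (rewrite <- (proj1_pair h h'), <- Hw, comp_assoc, proj1_pair; apply comp_id_l).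
  assert (Hh' : h' = w) by (rewrite <- (proj2_pair h h'), <- Hw, comp_assoc, proj2_pair; apply comp_id_l).
  congruence.
Qed.

End DiagonalKernels.

Lemma opposite_id_of_isometric_pair (X K : C) (a b : Hom K X) :
  add (star a ∘ a) (star b ∘ b) = idm K -> add a b = zero ->
  (forall (A : C) (x y : Hom X A), x ∘ a = y ∘ a -> x = y) ->
  exists m : Hom X X, add (idm X) m = zero.
Proof.
  intros Hiso Hsum Hepi.
  assert (Hbb : star b ∘ b = star a ∘ a).
  { apply (opposite_unique (t := star b ∘ a)).
    - now rewrite <- comp_add_l, add_comm, Hsum, comp_zero_r.
    - now rewrite <- comp_add_r, <- star_add, Hsum, star_zero, comp_zero_l. }
  set (c := add (star a) (star a)).
  assert (Hca : c ∘ a = idm K) by (unfold c; now rewrite comp_add_r, <- Hiso, Hbb).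
  assert (Hac : a ∘ c = idm X).
  { apply Hepi. now rewrite <- comp_assoc, Hca, comp_id_l, comp_id_r. }
  exists (b ∘ c). now rewrite <- Hac, <- comp_add_r, Hsum, comp_zero_l.
Qed.

Lemma exists_opposite_id (X : C) : exists m : Hom X X, add (idm X) m = zero.
Proof.
  destruct (diagonal_kernels (proj1_pair (idm X) (idm X)) (proj2_pair _ _))
    as (Z & g & Hg).
  destruct (isometric_kernels (star (pair (idm X) (idm X)))) as (K & k & Hiso & Hk).
  apply (opposite_id_of_isometric_pair (a := star s1 ∘ k) (b := star s2 ∘ k)).
  - unfold isometry in Hiso. now rewrite (pair_eta k), star_pair_comp_pair in Hiso.
  - exact (codiag_kernel_proj_sum Hk).
  - apply epi_of_star_mono. exact (codiag_kernel_proj1_star_mono Hg Hk).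
Qed.

Definition opp_id (X : C) : Hom X X :=
  proj1_sig (constructive_indefinite_description _ (exists_opposite_id X)).

Lemma add_opp_id (X : C) : add (idm X) (opp_id X) = zero.
Proof. exact (proj2_sig (constructive_indefinite_description _ (exists_opposite_id X))). Qed.

Definition opp (X Y : C) (f : Hom X Y) : Hom X Y := opp_id Y ∘ f.

Lemma add_opp_r (X Y : C) (f : Hom X Y) : add f (opp f) = zero.
Proof.
  unfold opp. rewrite <- (comp_id_l f) at 1.
  now rewrite <- comp_add_r, add_opp_id, comp_zero_l.
Qed.

Lemma add_opp_l (X Y : C) (f : Hom X Y) : add (opp f) f = zero.
Proof. now rewrite add_comm, add_opp_r. Qed.

Lemma comp_opp_l (X Y Z : C) (f : Hom X Y) (g : Hom Y Z) : opp g ∘ f = opp (g ∘ f).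
Proof. unfold opp. now rewrite comp_assoc. Qed.

Lemma comp_opp_r (X Y Z : C) (f : Hom X Y) (g : Hom Y Z) : g ∘ opp f = opp (g ∘ f).
Proof.
  apply (opposite_unique (t := g ∘ f)).
  - now rewrite <- comp_add_l, add_opp_l, comp_zero_r.
  - apply add_opp_l.
Qed.

Lemma star_opp (X Y : C) (f : Hom X Y) : star (opp f) = opp (star f).
Proof.
  apply (opposite_unique (t := star f)).
  - now rewrite <- star_add, add_opp_l, star_zero.
  - apply add_opp_l.
Qed.

Lemma opp_opp (X Y : C) (f : Hom X Y) : opp (opp f) = f.
Proof. apply (opposite_unique (t := opp f)); [apply add_opp_l | apply add_opp_r]. Qed.

Lemma contractive_iff (X Y : C) (f : Hom X Y) :
  contractive f <-> exists (W : C) (w : Hom X W), add (star f ∘ f) (star w ∘ w) = idm X.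
Proof.
  unfold contractive, hle, hermitian. split.
  - intros (_ & _ & W & w & Hsum). exists W, w. symmetry. now apply is_sum_add.
  - intros (W & w & Hsum). split; [| split].
    + now rewrite star_comp, star_star.
    + apply star_id.
    + exists W, w. now apply is_sum_add.
Qed.

Lemma isometry_contractive (X Y : C) (f : Hom X Y) : isometry f -> contractive f.
Proof.
  intros Hf. apply contractive_iff. exists (zobj C), (to_zero (zobj_zero C) X).
  assert (H0 : star (to_zero (zobj_zero C) X) ∘ to_zero (zobj_zero C) X = zero).
  { apply zero_morphismP. eexists _, _. reflexivity. }
  now rewrite H0, add_zero_r.
Qed.

Lemma contractive_comp (X Y Z : C) (f : Hom X Y) (g : Hom Y Z) :
  contractive f -> contractive g -> contractive (g ∘ f).
Proof.
  rewrite !contractive_iff. intros (W1 & y & Hf) (W2 & z & Hg).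
  exists (W2 ⊕ W1), (pair (z ∘ f) y).
  rewrite star_pair_comp_pair, <- add_assoc, <- Hf. f_equal.
  rewrite !star_comp, <- !comp_assoc, (comp_assoc (star g)), (comp_assoc (star z)).
  now rewrite <- comp_add_l, <- comp_add_r, Hg, comp_id_l.
Qed.

Lemma contractive_star (X Y : C) (f : Hom X Y) : contractive f -> contractive (star f).
Proof.
  rewrite !contractive_iff. intros (W & w & Hf).
  (* [1 - x = (1 - x)^2 + v^* v] for [x = f f^*], because [x x + v^* v = x]. *)
  set (x := f ∘ star f). set (e := add (idm Y) (opp x)). set (v := w ∘ star f).
  exists (Y ⊕ W), (pair e v).
  assert (Hx : star x = x) by (unfold x; now rewrite star_comp, star_star).
  assert (He : star e = e) by (unfold e; now rewrite star_add, star_id, star_opp, Hx).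
  assert (Hee : e ∘ e = add e (add (opp x) (x ∘ x))).
  { unfold e at 1. rewrite comp_add_r, comp_id_l. f_equal.
    unfold e. rewrite comp_add_l, comp_id_r, comp_opp_r, comp_opp_l, opp_opp. reflexivity. }
  assert (Hv : add (x ∘ x) (star v ∘ v) = x).
  { unfold x, v. rewrite star_comp, star_star, <- !comp_assoc, (comp_assoc (star f)), (comp_assoc (star w)).
    now rewrite <- comp_add_l, <- comp_add_r, Hf, comp_id_l. }
  change (f ∘ star f) with x.
  rewrite star_star, star_pair_comp_pair, He, Hee, !add_assoc, Hv, add_opp_l, add_zero_r.
  unfold e. now rewrite <- add_assoc, (add_comm x), add_assoc, add_opp_r, add_zero_r.
Qed.

End PreHilbert.

Theorem proposition7p3 (C : PreHilbertCategory) :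
  (forall (X Y : C) (f : Hom X Y), isometry f -> contractive f) /\
  (forall (X Y Z : C) (f : Hom X Y) (g : Hom Y Z),
      contractive f -> contractive g -> contractive (comp g f)) /\
  (forall (X Y : C) (f : Hom X Y), contractive f -> contractive (star f)).
Proof.
  split; [| split].
  - apply isometry_contractive.
  - apply contractive_comp.
  - apply contractive_star.
Qed.
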